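(* Let $n=p'q$ where $p',q$ are distinct primes both at least $7$, and let $A=L(n;p')$. Let $S=(x_1,x_2,x_3)$ be an $A$-extremal sequence for the Davenport constant in $\mathbb{Z}_n$. Then $S$ is equivalent with respect to $A$ to a sequence $(y_1,y_2,y_3)$ for which one of the following holds: (i) $y_1$ is the only term divisible by $q$, $y_1\neq 0$, and the image of $(y_2,y_3)$ under the natural map $\mathbb{Z}_n\to\mathbb{Z}_q$ is a $Q_q$-extremal sequence for the Davenport constant; (ii) $y_1$ is the only term coprime to $p'$, and the image of $(y_2,y_3)$ under the natural map $\mathbb{Z}_n\to\mathbb{Z}_q$ is a $Q_q$-extremal sequence for the Davenport constant.
   Context: $\mathbb{Z}_m$ is the integers mod $m$, $U(m)$ its unit group; for a prime $q$, $Q_q=\{x^2: x\in U(q)\}$. For nonempty $A\subseteq\mathbb{Z}_m\setminus\{0\}$, a sequence $(x_1,\ldots,x_k)$ is an $A$-weighted zero-sum sequence if $\sum a_ix_i=0$ for some $a_i\in A$; $D_A(m)$ is the least $k$ such that every length-$k$ sequence in $\mathbb{Z}_m$ has a nonempty $A$-weighted zero-sum subsequence; an $A$-extremal sequence for the Davenport constant is a sequence of length $D_A(m)-1$ with no $A$-weighted zero-sum subsequence. For a multiplicative group $A$, $(x_1,\ldots,x_k)$ and $(y_1,\ldots,y_k)$ are equivalent with respect to $A$ if there are $a_i\in A$, a unit $c$ and a permutation $\sigma$ with $y_{\sigma(i)}=c\,a_ix_i$ for all $i$. For odd $m=\prod p_i^{r_i}$, prime $p\mid m$ and $a\in U(m)$,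 $\left(\frac{a}{p}\right)$ is the Legendre symbol of the image mod $p$, $\left(\frac{a}{m}\right)=\prod\left(\frac{a}{p_i}\right)^{r_i}$, and $L(m;p')=\{a\in U(m):\left(\frac{a}{m}\right)=\left(\frac{a}{p'}\right)\}$ for a prime $p'\mid m$. *)

From HB Require Import structures.
From mathcomp Require Import all_boot all_order all_algebra all_fingroup.
Set Implicit Arguments. Unset Strict Implicit. Unset Printing Implicit Defensive.
Import Order.TTheory GRing.Theory Num.Theory.
Local Open Scope ring_scope.

Definition legendre (p a : nat) : int :=
  if (p %| a)%N then 0
  else if [exists x : 'I_p, (x * x) %% p == a %% p]%N then 1 else -1.

Definition jacobi (m a : nat) : int :=
  \prod_(p <- primes m) legendre p a ^+ logn p m.

Definition Lset (m p' : nat) : pred 'Z_m :=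
  fun a => (a \is a GRing.unit) && (jacobi m (val a) == legendre p' (val a)).

Definition Qset (q : nat) : pred 'Z_q :=
  fun y => [exists x : 'Z_q, (x \is a GRing.unit) && (y == x ^+ 2)].

Arguments Lset : clear implicits.
Arguments Qset : clear implicits.

Section WZS.
Variable R : comUnitRingType.

Definition has_wzs (A : pred R) (s : seq R) : Prop :=
  exists (I : {set 'I_(size s)}) (a : 'I_(size s) -> R),
    [/\ I != set0, (forall i, i \in I -> A (a i)) &
        \sum_(i in I) a i * s`_i = 0].

Definition is_davenport (A : pred R) (k : nat) : Prop :=
  (forall s : seq R, size s = k -> has_wzs A s) /\
  (forall k' : nat, (k' < k)%N -> ~ (forall s : seq R, size s = k' -> has_wzs A s)).

Definition extremal (A : pred R) (s : seq R) : Prop :=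
  exists k, [/\ is_davenport A k, size s = k.-1 & ~ has_wzs A s].

Definition equiv_wrt (A : pred R) (x y : seq R) : Prop :=
  size y = size x /\
  exists (sigma : {perm 'I_(size x)}) (a : 'I_(size x) -> R) (c : R),
    c \is a GRing.unit /\
    forall i : 'I_(size x), A (a i) /\ y`_(sigma i) = c * a i * x`_i.
End WZS.

From HB Require Import structures.
From mathcomp Require Import all_boot all_order all_algebra all_fingroup all_solvable.
From mathcomp Require Import ring.
Set Implicit Arguments. Unset Strict Implicit. Unset Printing Implicit Defensive.
Import GRing.Theory.
Local Open Scope ring_scope.

(* Let n = pq and write u, v for the reductions mod p and mod q.  Since
   (a/n) = (a/p)(a/q), a unit a lies in L(n; p) as soon as v a is a square, so by
   the Chinese remainder theorem (x1, x2, x3) has an L-weighted zero-sum as soon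
   as there are weights a_i mod p and b_i mod q, each pair either both zero or a
   unit and a square, not all zero, with sum a_i u x_i = 0 and sum b_i v x_i = 0.
   For q >= 7 every c1 s1 + c2 s2 + c3 s3 = 0 with units c_i has a solution in
   squares, so D_{Q_q}(q) = 3.  Hence in a zero-sum free triple at most one v x_i
   vanishes, and if none does then, as any two nonzero elements of F_p (p odd)
   admit a relation with nonzero weights, exactly one u x_i is nonzero. *)

Section WeightedZeroSums.
Variables (R : comUnitRingType) (A : pred R).

Lemma has_wzsE (s : seq R) :
  has_wzs A s <-> exists w : 'I_(size s) -> R,
    [/\ forall i, (w i == 0) || A (w i), exists i, A (w i) &
        \sum_i w i * s`_i = 0].
Proof.
split=> [[I [a [/set0Pn[i Ii] AI sum0]]]|[w [w0A [i Ai] sum0]]].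
  exists (fun j => if j \in I then a j else 0); split.
  - by move=> j; case: ifP => [/AI ->|_]; rewrite ?eqxx ?orbT.
  - by exists i; rewrite Ii AI.
  rewrite -[RHS]sum0 [RHS]big_mkcond; apply: eq_bigr => j _.
  by case: ifP; rewrite ?mul0r.
exists [set j | A (w j)], w; split.
- by apply/set0Pn; exists i; rewrite inE.
- by move=> j; rewrite inE.
rewrite -[RHS]sum0 [LHS]big_mkcond; apply: eq_bigr => j _; rewrite inE.
by case: ifP => // Aj; have /orP[/eqP->|] := w0A j; rewrite ?mul0r ?Aj.
Qed.

Definition wzs3 (x1 x2 x3 : R) : Prop :=
  exists w1 w2 w3,
    [/\ [&& (w1 == 0) || A w1, (w2 == 0) || A w2 & (w3 == 0) || A w3],
        [|| w1 != 0, w2 != 0 | w3 != 0] & w1 * x1 + w2 * x2 + w3 * x3 = 0].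

Lemma has_wzs3 x1 x2 x3 : wzs3 x1 x2 x3 -> has_wzs A [:: x1; x2; x3].
Proof.
case=> w1 [w2 [w3 [/and3P[A1 A2 A3] nz sum0]]]; apply/has_wzsE.
exists (fun i : 'I_3 => [:: w1; w2; w3]`_i); split.
- by case=> [[|[|[|]]] ?].
- have A_nz w : (w == 0) || A w -> w != 0 -> A w.
    by case/orP=> [/eqP->|]; rewrite ?eqxx.
  case/or3P: nz => [/(A_nz _ A1)|/(A_nz _ A2)|/(A_nz _ A3)] Aw.
  + by exists ord0.
  + by exists (@Ordinal 3 1 isT).
  + by exists (@Ordinal 3 2 isT).
by rewrite !big_ord_recl big_ord0 /= addr0 addrA.
Qed.

Lemma has_wzs2 x1 x2 : has_wzs A [:: x1; x2] ->
  exists w1 w2, [/\ (w1 == 0) || A w1, (w2 == 0) || A w2, A w1 || A w2 &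
                    w1 * x1 + w2 * x2 = 0].
Proof.
case/has_wzsE=> w [w0A [i Ai] sum0]; exists (w ord0), (w (lift ord0 ord0)).
split => //; last by move: sum0; rewrite !big_ord_recl big_ord0 addr0.
by case: i Ai => -[|[|//]] ? Ai; apply/orP; [left | right];
  apply: etrans Ai; congr (A (w _)); apply: val_inj.
Qed.

Lemma wzs3_swap12 x1 x2 x3 : wzs3 x1 x2 x3 -> wzs3 x2 x1 x3.
Proof.
case=> w1 [w2 [w3 [/and3P[A1 A2 A3] nz sum0]]]; exists w2, w1, w3; split.
- by rewrite A1 A2 A3.
- by case/or3P: nz => ->; rewrite ?orbT.
by rewrite -sum0; ring.
Qed.

Lemma wzs3_swap23 x1 x2 x3 : wzs3 x1 x2 x3 -> wzs3 x1 x3 x2.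
Proof.
case=> w1 [w2 [w3 [/and3P[A1 A2 A3] nz sum0]]]; exists w1, w3, w2; split.
- by rewrite A1 A2 A3.
- by case/or3P: nz => ->; rewrite ?orbT.
by rewrite -sum0; ring.
Qed.

Lemma equiv_wrt_perm (s t : seq R) (sigma : {perm 'I_(size s)}) :
  A 1 -> size t = size s -> (forall i, t`_(sigma i) = s`_i) -> equiv_wrt A s t.
Proof.
move=> A1 size_t ts; split => //; exists sigma, (fun=> 1), 1.
by split=> [|i]; rewrite ?unitr1 // ts !mul1r.
Qed.

Lemma equiv_wrt_refl s : A 1 -> equiv_wrt A s s.
Proof. by move=> A1; apply: (@equiv_wrt_perm s s 1) => // i; rewrite perm1. Qed.

Lemma equiv_wrt_swap12 x1 x2 x3 : A 1 -> equiv_wrt A [:: x1; x2; x3] [:: x2; x1; x3].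
Proof.
move=> A1; pose sigma := tperm (@Ordinal 3 0 isT) (@Ordinal 3 1 isT).
apply: (@equiv_wrt_perm [:: x1; x2; x3] _ sigma) => //.
by case=> [[|[|[|]]] ?] //=; rewrite permE.
Qed.

Lemma equiv_wrt_swap13 x1 x2 x3 : A 1 -> equiv_wrt A [:: x1; x2; x3] [:: x3; x2; x1].
Proof.
move=> A1; pose sigma := tperm (@Ordinal 3 0 isT) (@Ordinal 3 2 isT).
apply: (@equiv_wrt_perm [:: x1; x2; x3] _ sigma) => //.
by case=> [[|[|[|]]] ?] //=; rewrite permE.
Qed.

End WeightedZeroSums.

Section SquaresModPrime.
Variable q : nat.
Hypothesis q_prime : prime q.
Local Notation Q := (Qset q).

Lemma unitZp_prime (x : 'Z_q) : (x \is a GRing.unit) = (x != 0).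
Proof.
have q_gt1 := prime_gt1 q_prime.
apply/idP/idP => [|x_nz]; first by apply: contraTneq => ->; rewrite unitr0.
rewrite -(natr_Zp x) unitZpE // prime_coprime // gtnNdvd //.
  by rewrite lt0n; apply: contra x_nz => /eqP x0; apply/eqP/val_inj.
by case: x {x_nz} => x /=; rewrite Zp_cast.
Qed.

Lemma Zp_natr_unit k : (0 < k < q)%N -> (k%:R : 'Z_q) \is a GRing.unit.
Proof.
case/andP=> k_gt0 k_ltq; rewrite unitZpE ?prime_gt1 // prime_coprime //.
by rewrite gtnNdvd.
Qed.

Lemma QsetP y : reflect (exists2 x, x \is a GRing.unit & y = x ^+ 2) (Q y).
Proof.
apply: (iffP existsP) => [[x /andP[Ux /eqP ->]]|[x Ux ->]]; exists x => //.
by rewrite Ux eqxx.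
Qed.

Lemma Qset_sqr x : x \is a GRing.unit -> Q (x ^+ 2).
Proof. by move=> Ux; apply/QsetP; exists x. Qed.

Lemma Qset_unit y : Q y -> y \is a GRing.unit.
Proof. by case/QsetP=> x Ux ->; rewrite unitrX. Qed.

Lemma Qset_neq0 y : Q y -> y != 0.
Proof. by move/Qset_unit; apply: contraTneq => ->; rewrite unitr0. Qed.

Lemma Qset1 : Q 1.
Proof. by rewrite -(expr1n _ 2); apply/Qset_sqr/unitr1. Qed.

Lemma QsetM x y : Q x -> Q y -> Q (x * y).
Proof.
case/QsetP=> a Ua -> /QsetP[b Ub ->]; rewrite -exprMn.
by apply: Qset_sqr; rewrite unitrM Ua.
Qed.

Lemma QsetV x : Q x -> Q x^-1.
Proof. by case/QsetP=> a Ua ->; rewrite -exprVn; apply/Qset_sqr; rewrite unitrV. Qed.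

Lemma Qset_Mnonres x y : Q x -> ~~ Q y -> ~~ Q (x * y).
Proof.
move=> Qx; apply: contra => Qxy.
by rewrite -(mulKr (Qset_unit Qx) y); apply: QsetM => //; apply: QsetV.
Qed.

(* The unit group is cyclic, so the non-residues are the odd powers of a generator. *)
Lemma nonres_mul x y : x \is a GRing.unit -> y \is a GRing.unit ->
  ~~ Q x -> ~~ Q y -> Q (x * y).
Proof.
have /cyclicP[g gen_g] := units_Zp_cyclic q_prime.
have powg z : z \is a GRing.unit -> exists k, z = val g ^+ k.
  move=> Uz; have : FinRing.unit 'Z_q Uz \in units_Zp q by rewrite inE.
  by rewrite gen_g => /cycleP[k /(congr1 val)]; rewrite FinRing.val_unitX; exists k.
have Q_even k : ~~ odd k -> Q (val g ^+ k).
  move=> even_k; rewrite -(odd_double_half k) (negbTE even_k) -muln2 exprM.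
  by apply/Qset_sqr/unitrX/(valP g).
have odd_nonres k : ~~ Q (val g ^+ k) -> odd k := contraR (Q_even k).
move=> /powg[i ->] /powg[j ->] /odd_nonres odd_i /odd_nonres odd_j.
by rewrite -exprD; apply: Q_even; rewrite oddD odd_i odd_j.
Qed.

Lemma exists_nonres : (2 < q)%N -> exists2 v : 'Z_q, v \is a GRing.unit & ~~ Q v.
Proof.
move=> q_gt2.
have [/exists_inP[v Uv nQv]|/exists_inPn all_sq] :=
  boolP [exists (v : 'Z_q | v \is a GRing.unit), ~~ Q v]; first by exists v.
pose sq (x : 'Z_q) := x ^+ 2.
have sq_onto y : y \in codom sq.
  apply/codomP; have [->|y_nz] := eqVneq y 0; first by exists 0; rewrite /sq expr0n.
  have Uy : y \is a GRing.unit by rewrite unitZp_prime.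
  by have /negPn/QsetP[x _ ->] := all_sq y Uy; exists x.
have sq_inj : {in predT &, injective sq}.
  apply/image_injP; rewrite eqn_leq leq_image_card /=.
  by apply/subset_leq_card/subsetP => y _; apply: sq_onto.
have two_unit : (2%:R : 'Z_q) \is a GRing.unit by apply: Zp_natr_unit; rewrite q_gt2.
have one_opp : 1 = -1 :> 'Z_q by apply: sq_inj; rewrite // /sq sqrrN.
by move: two_unit; rewrite mulr2n {1}one_opp addNr unitr0.
Qed.

(* Otherwise Q and 0 together would be closed under addition, hence contain every k%:R. *)
Lemma Qset_add_Qset_nonres : (2 < q)%N ->
  exists s t, [/\ Q s, Q t, (s + t) \is a GRing.unit & ~~ Q (s + t)].
Proof.
move=> /exists_nonres[v Uv nQv].
have [/existsP[s /existsP[t /and4P[]]]|] :=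
  boolP [exists s, exists t, [&& Q s, Q t, (s + t) \is a GRing.unit & ~~ Q (s + t)]].
  by exists s, t.
rewrite negb_exists => /forallP Q0_addr.
have Q0_natr k : (k%:R : 'Z_q) = 0 \/ Q k%:R.
  elim: k => [|k [k0|Qk]]; first by left.
    by right; rewrite -natr1 k0 add0r Qset1.
  have := Q0_addr k%:R; rewrite negb_exists => /forallP/(_ 1).
  rewrite natr1 Qk Qset1 unitZp_prime /= negb_and !negbK.
  by case/orP=> [/eqP|]; [left | right].
have := Q0_natr (val v); rewrite natr_Zp => -[v0|Qv].
  by move: Uv; rewrite v0 unitr0.
by rewrite Qv in nQv.
Qed.

Lemma Qset_add_nonres_Qset : (3 < q)%N ->
  exists s v, [/\ Q s, v \is a GRing.unit, ~~ Q v & Q (s + v)].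
Proof.
move=> q_gt3; have q_gt2 := ltnW q_gt3.
have U3 : (3%:R : 'Z_q) \is a GRing.unit by rewrite Zp_natr_unit.
have Q4 : Q 4%:R.
  rewrite (natrM _ 2 2) -expr2; apply/Qset_sqr/Zp_natr_unit.
  by rewrite (ltn_trans _ q_gt3).
have [Q3|nQ3] := boolP (Q 3%:R); last first.
  by exists 1, 3%:R; rewrite Qset1 addrC natr1.
have [Qm1|nQm1] := boolP (Q (-1)).
  have [s [t [Qs Qt Ust nQst]]] := Qset_add_Qset_nonres q_gt2.
  exists (-1 * t), (s + t); split => //; first exact: QsetM.
  by rewrite mulN1r addrC addrK.
exists 4%:R, (-1 * 3%:R); split => //.
- by rewrite unitrM unitrN unitr1.
- by rewrite mulrC; apply: Qset_Mnonres.
by rewrite mulN1r -[4%N]/(1 + 3)%N natrD addrK Qset1.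
Qed.

Lemma nonres_add_nonres_Qset : (2 < q)%N -> exists v w,
  [/\ v \is a GRing.unit, ~~ Q v, w \is a GRing.unit, ~~ Q w & Q (v + w)].
Proof.
move=> /Qset_add_Qset_nonres[s [t [Qs Qt Ust nQst]]].
exists (s * (s + t)), (t * (s + t)); split.
- by rewrite unitrM Qset_unit.
- exact: Qset_Mnonres.
- by rewrite unitrM Qset_unit.
- exact: Qset_Mnonres.
by rewrite -mulrDl; apply: nonres_mul.
Qed.

Lemma Qset_coset_sum d1 d2 : (7 <= q)%N ->
  d1 \is a GRing.unit -> d2 \is a GRing.unit ->
  exists r1 r2, [/\ Q (d1 * r1), Q (d2 * r2) & Q (r1 + r2)].
Proof.
move=> q_ge7 Ud1 Ud2.
have q_gt3 : (3 < q)%N by apply: leq_trans q_ge7.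
have Qsqr k : (0 < k < q)%N -> Q (k ^ 2)%N%:R.
  by move=> k_unit; rewrite natrX; apply/Qset_sqr/Zp_natr_unit.
have [Qd1|nQd1] := boolP (Q d1); have [Qd2|nQd2] := boolP (Q d2).
- exists (3 ^ 2)%N%:R, (4 ^ 2)%N%:R.
  rewrite -natrD (_ : (3 ^ 2 + 4 ^ 2 = 5 ^ 2)%N) //.
  by rewrite !QsetM ?Qsqr //= (leq_trans _ q_ge7).
- have [s [v [Qs Uv nQv Qsv]]] := Qset_add_nonres_Qset q_gt3.
  by exists s, v; split; [apply: QsetM | apply: nonres_mul | ].
- have [s [v [Qs Uv nQv Qsv]]] := Qset_add_nonres_Qset q_gt3.
  by exists v, s; split; [apply: nonres_mul | apply: QsetM | rewrite addrC].
have [v [w [Uv nQv Uw nQw Qvw]]] := nonres_add_nonres_Qset (ltnW q_gt3).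
by exists v, w; split => //; apply: nonres_mul.
Qed.

Lemma Qset_zero_sum3 c1 c2 c3 : (7 <= q)%N ->
  c1 \is a GRing.unit -> c2 \is a GRing.unit -> c3 \is a GRing.unit ->
  exists s1 s2 s3, [/\ Q s1, Q s2, Q s3 & s1 * c1 + s2 * c2 + s3 * c3 = 0].
Proof.
move=> q_ge7 Uc1 Uc2 Uc3.
have Ud k : k \is a GRing.unit -> - c3 / k \is a GRing.unit.
  by move=> Uk; rewrite unitrM unitrN unitrV Uk Uc3.
have [r1 [r2 [Q1 Q2 Q12]]] := Qset_coset_sum q_ge7 (Ud _ Uc1) (Ud _ Uc2).
exists (- c3 / c1 * r1), (- c3 / c2 * r2), (r1 + r2); split => //.
by rewrite -!mulrA !(mulrC _ c1) !(mulrC _ c2) !mulrA !divrK //; ring.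
Qed.

Lemma Qset_zsfree_pair v : v \is a GRing.unit -> ~~ Q v -> ~ has_wzs Q [:: 1; - v].
Proof.
move=> Uv nQv /has_wzs2[w1 [w2 []]].
rewrite mulr1 mulrN => /orP w1_0 /orP w2_0 Qw /eqP.
rewrite subr_eq0 => /eqP w1E.
case: w2_0 => [/eqP w2_0|Qw2].
  by move: Qw; rewrite w1E w2_0 mul0r orbb => /Qset_neq0; rewrite eqxx.
case: w1_0 => [/eqP w1_0|Qw1].
  have : w2 * v \is a GRing.unit by rewrite unitrM Uv Qset_unit.
  by rewrite -w1E w1_0 unitr0.
by move: Qw1; rewrite w1E (negbTE (Qset_Mnonres Qw2 nQv)).
Qed.

Lemma davenport_Qset : (7 <= q)%N -> is_davenport Q 3.
Proof.
move=> q_ge7; split.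
  case=> [|s1 [|s2 [|s3 []]]] //= _; apply: has_wzs3.
  have [->|s1_nz] := eqVneq s1 0.
    by exists 1, 0, 0; rewrite eqxx Qset1 oner_neq0 ?orbT; split => //; ring.
  have [->|s2_nz] := eqVneq s2 0.
    by exists 0, 1, 0; rewrite eqxx Qset1 oner_neq0 ?orbT; split => //; ring.
  have [->|s3_nz] := eqVneq s3 0.
    by exists 0, 0, 1; rewrite eqxx Qset1 oner_neq0 ?orbT; split => //; ring.
  rewrite -!unitZp_prime in s1_nz s2_nz s3_nz.
  have [t1 [t2 [t3 [Qt1 Qt2 Qt3 sum0]]]] := Qset_zero_sum3 q_ge7 s1_nz s2_nz s3_nz.
  by exists t1, t2, t3; rewrite Qt1 Qt2 Qt3 Qset_neq0 ?orbT.
case=> [|[|[|//]]] _ all_wzs.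
- by have /has_wzsE[w [_ [[] //]]] := all_wzs [::] erefl.
- have /has_wzsE[w [_ [i Qwi]]] := all_wzs [:: 1] erefl.
  have i0 : i = ord0 by apply: val_inj; case: i {Qwi} => -[].
  by rewrite big_ord1 mulr1 => wi0; move/Qset_neq0: Qwi; rewrite i0 wi0 eqxx.
have [v Uv nQv] := exists_nonres (leq_trans (isT : (2 < 7)%N) q_ge7).
exact: Qset_zsfree_pair Uv nQv (all_wzs [:: 1; - v] erefl).
Qed.
End SquaresModPrime.

Definition Zp_red {n} (m : nat) (x : 'Z_n) : 'Z_m := (val x)%:R.

Section ZpReduction.
Variables n m : nat.
Hypotheses (n_gt1 : (1 < n)%N) (m_gt1 : (1 < m)%N) (m_dvd_n : (m %| n)%N).

Lemma Zp_red_eq0 (x : 'Z_n) : (Zp_red m x == 0) = (m %| val x)%N.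
Proof.
by rewrite /dvdn -(val_Zp_nat m_gt1) -[_ == 0](inj_eq val_inj).
Qed.

Lemma Zp_red_natr k : Zp_red m (k%:R : 'Z_n) = k%:R.
Proof. by apply: val_inj; rewrite /Zp_red /= !val_Zp_nat // modn_dvdm. Qed.

Lemma Zp_redD x y : Zp_red m (x + y : 'Z_n) = Zp_red m x + Zp_red m y.
Proof. by rewrite -[x]natr_Zp -[y]natr_Zp -natrD !Zp_red_natr natrD. Qed.

Lemma Zp_redM x y : Zp_red m (x * y : 'Z_n) = Zp_red m x * Zp_red m y.
Proof. by rewrite -[x]natr_Zp -[y]natr_Zp -natrM !Zp_red_natr natrM. Qed.

End ZpReduction.

Section ChineseRemainder.
Variables n m1 m2 : nat.
Hypotheses (m1_gt1 : (1 < m1)%N) (m2_gt1 : (1 < m2)%N) (m12_coprime : coprime m1 m2).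
Hypothesis n_eq : n = (m1 * m2)%N.

Definition Zp_crt (a : 'Z_m1) (b : 'Z_m2) : 'Z_n := (chinese m1 m2 (val a) (val b))%:R.

Let n_gt1 : (1 < n)%N.
Proof. by rewrite n_eq (leq_trans m1_gt1) // leq_pmulr // ltnW. Qed.

Let m1_dvd_n : (m1 %| n)%N. Proof. by rewrite n_eq dvdn_mulr. Qed.
Let m2_dvd_n : (m2 %| n)%N. Proof. by rewrite n_eq dvdn_mull. Qed.

Lemma Zp_red_crtl a b : Zp_red m1 (Zp_crt a b) = a.
Proof.
rewrite Zp_red_natr //; apply: val_inj.
by rewrite /= val_Zp_nat // chinese_modl // modn_small // -{2}(Zp_cast m1_gt1).
Qed.

Lemma Zp_red_crtr a b : Zp_red m2 (Zp_crt a b) = b.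
Proof.
rewrite Zp_red_natr //; apply: val_inj.
by rewrite /= val_Zp_nat // chinese_modr // modn_small // -{2}(Zp_cast m2_gt1).
Qed.

Lemma Zp_red_eq0_coprime (x : 'Z_n) : Zp_red m1 x = 0 -> Zp_red m2 x = 0 -> x = 0.
Proof.
move=> /eqP; rewrite Zp_red_eq0 // => m1_dvd /eqP; rewrite Zp_red_eq0 // => m2_dvd.
have : (m1 * m2 %| val x)%N by rewrite Gauss_dvd // m1_dvd.
rewrite -n_eq /dvdn modn_small => [/eqP x0|]; first exact: val_inj.
by case: x {m1_dvd m2_dvd} => x /=; rewrite Zp_cast.
Qed.

End ChineseRemainder.

Lemma primes_mul_prime p q : prime p -> prime q -> p != q ->
  perm_eq (primes (p * q)) [:: p; q].
Proof.
move=> p_pr q_pr pq.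
apply: uniq_perm => [||r]; rewrite ?primes_uniq //= ?inE ?pq // mem_primes.
rewrite muln_gt0 !prime_gt0 //=; apply/andP/orP.
  by case=> r_pr; rewrite Euclid_dvdM // !dvdn_prime2 // => /orP.
case=> /eqP->; split => //; first exact: dvdn_mulr.
exact: dvdn_mull.
Qed.

Lemma jacobi_mul_prime p q a : prime p -> prime q -> p != q ->
  jacobi (p * q) a = legendre p a * legendre q a.
Proof.
move=> p_pr q_pr pq; rewrite /jacobi (perm_big _ (primes_mul_prime p_pr q_pr pq)).
rewrite !big_cons big_nil !lognM ?prime_gt0 // !logn_prime //.
by rewrite !eqxx (eq_sym q) (negbTE pq) addn0 add0n !expr1 /= mulr1.
Qed.

Lemma legendre_sqr q a (y : 'Z_q) : prime q -> ~~ (q %| a)%N ->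
  (a%:R : 'Z_q) = y ^+ 2 -> legendre q a = 1.
Proof.
move=> q_pr q_ndvd a_sqr; have q_gt1 := prime_gt1 q_pr.
rewrite /legendre (negbTE q_ndvd); case: existsP => // -[].
have y_lt_q : (val y < q)%N by case: y {a_sqr} => y /=; rewrite Zp_cast.
exists (Ordinal y_lt_q); apply/eqP.
by rewrite -(val_Zp_nat q_gt1 a) a_sqr expr2 /= -{3}(Zp_cast q_gt1).
Qed.

Lemma Lset_of_red p q (w : 'Z_(p * q)) : prime p -> prime q -> p != q ->
  Zp_red (pdiv p) w != 0 -> Qset q (Zp_red q w) -> Lset (p * q) p w.
Proof.
move=> p_pr q_pr pq; have [p_gt1 q_gt1] := (prime_gt1 p_pr, prime_gt1 q_pr).
have pq_gt1 : (1 < p * q)%N by rewrite (leq_trans p_gt1) // leq_pmulr // ltnW.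
rewrite Zp_red_eq0 pdiv_id // => p_ndvd Qw.
have q_ndvd : ~~ (q %| val w)%N by rewrite -Zp_red_eq0 // Qset_neq0.
apply/andP; split.
  by rewrite -[w]natr_Zp unitZpE // coprimeMl !prime_coprime // p_ndvd.
have /QsetP[y _ w_sqr] := Qw.
by rewrite jacobi_mul_prime // (legendre_sqr q_pr q_ndvd w_sqr) mulr1.
Qed.

Lemma annihilator3 (R : idomainType) (y1 y2 y3 : R) : 2%:R != 0 :> R ->
  (1 < (y1 != 0%R) + (y2 != 0%R) + (y3 != 0%R))%N ->
  exists a1 a2 a3, [/\ a1 != 0, a2 != 0, a3 != 0 & a1 * y1 + a2 * y2 + a3 * y3 = 0].
Proof.
move=> two_nz.
have [->|y1_nz] := eqVneq y1 0; have [->|y2_nz] := eqVneq y2 0;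
  have [->|y3_nz] := eqVneq y3 0 => //= two_nz_y.
- by exists 1, y3, (- y2); rewrite oner_neq0 oppr_eq0; split => //; ring.
- by exists y3, 1, (- y1); rewrite oner_neq0 oppr_eq0; split => //; ring.
- by exists y2, (- y1), 1; rewrite oner_neq0 oppr_eq0; split => //; ring.
exists (y2 * y3), (y1 * y3), (- (2%:R * y1 * y2)).
by rewrite oppr_eq0 !mulf_neq0 //; split => //; ring.
Qed.

Section ZeroSumFreeTriples.
Variables p q : nat.
Hypotheses (p_prime : prime p) (q_prime : prime q) (p_neq_q : p != q).
Hypotheses (p_ge7 : (7 <= p)%N) (q_ge7 : (7 <= q)%N).
Local Notation n := (p * q)%N.
Local Notation A := (Lset n p).
Local Notation u := (@Zp_red n (pdiv p)).
Local Notation v := (@Zp_red n q).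

Let pdiv_gt1 : (1 < pdiv p)%N. Proof. by rewrite pdiv_id // prime_gt1. Qed.
Let q_gt1 : (1 < q)%N. Proof. exact: prime_gt1. Qed.
Let n_gt1 : (1 < n)%N.
Proof. by rewrite (leq_trans q_gt1) // leq_pmull // prime_gt0. Qed.
Let pdiv_coprime : coprime (pdiv p) q.
Proof. by rewrite pdiv_id // prime_coprime // dvdn_prime2. Qed.
Let n_eq : n = (pdiv p * q)%N. Proof. by rewrite pdiv_id. Qed.

Let uD x y : u (x + y) = u x + u y.
Proof. by rewrite Zp_redD // n_eq dvdn_mulr. Qed.
Let uM x y : u (x * y) = u x * u y.
Proof. by rewrite Zp_redM // n_eq dvdn_mulr. Qed.
Let vD x y : v (x + y) = v x + v y.
Proof. by rewrite Zp_redD // dvdn_mull. Qed.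
Let vM x y : v (x * y) = v x * v y.
Proof. by rewrite Zp_redM // dvdn_mull. Qed.

Lemma red_eq0 x : u x = 0 -> v x = 0 -> x = 0.
Proof. exact: Zp_red_eq0_coprime. Qed.

Definition compatible (a : 'F_p) (b : 'Z_q) := if a == 0 then b == 0 else Qset q b.

Lemma crt_weight a b : compatible a b ->
  (Zp_crt n a b == 0) || A (Zp_crt n a b).
Proof.
have [ured vred] := (Zp_red_crtl pdiv_gt1 q_gt1 pdiv_coprime n_eq a b,
                     Zp_red_crtr pdiv_gt1 q_gt1 pdiv_coprime n_eq a b).
rewrite /compatible; have [a0 /eqP b0|a_nz Qb] := eqVneq a 0.
  by rewrite (@red_eq0 (Zp_crt n a b)) ?ured ?vred ?eqxx.
by rewrite Lset_of_red ?ured ?vred ?orbT.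
Qed.

Lemma wzs3_of_red x1 x2 x3 a1 a2 a3 b1 b2 b3 :
  [&& compatible a1 b1, compatible a2 b2 & compatible a3 b3] ->
  [|| b1 != 0, b2 != 0 | b3 != 0] ->
  a1 * u x1 + a2 * u x2 + a3 * u x3 = 0 ->
  b1 * v x1 + b2 * v x2 + b3 * v x3 = 0 -> wzs3 A x1 x2 x3.
Proof.
move=> /and3P[c1 c2 c3] b_nz ua0 vb0.
have [ured vred] := (Zp_red_crtl pdiv_gt1 q_gt1 pdiv_coprime n_eq,
                     Zp_red_crtr pdiv_gt1 q_gt1 pdiv_coprime n_eq).
exists (Zp_crt n a1 b1), (Zp_crt n a2 b2), (Zp_crt n a3 b3).
have crt_nz (a : 'F_p) (b : 'Z_q) : b != 0 -> Zp_crt n a b != 0.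
  by apply: contraNneq => w0; rewrite -(vred a b) w0.
split.
- by rewrite !crt_weight.
- by case/or3P: b_nz => /crt_nz ->; rewrite ?orbT.
by apply: red_eq0; rewrite !(uD, uM, vD, vM) ?ured ?vred.
Qed.

Lemma Lset1 : A 1.
Proof.
have red1 m : (1 < m)%N -> (m %| n)%N -> Zp_red m (1 : 'Z_n) = 1.
  by move=> m_gt1 m_dvd; apply: (Zp_red_natr n_gt1 m_gt1 m_dvd 1).
by apply: Lset_of_red => //; rewrite red1 ?Qset1 ?oner_neq0 ?dvdn_mull.
Qed.

Lemma compatible_indicator (b : 'Z_q) :
  (b == 0) || Qset q b -> compatible (b != 0)%:R b.
Proof. by rewrite /compatible; case: eqP => [->|_] /=; rewrite ?eqxx ?oner_eq0. Qed.

Lemma compatible_indicator_r (a : 'F_p) : compatible a (a != 0)%:R.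
Proof. by rewrite /compatible; case: eqP => [_|_] /=; rewrite ?eqxx ?Qset1. Qed.

Lemma zsfree_neq0 x1 x2 x3 : ~ wzs3 A x1 x2 x3 -> x1 != 0.
Proof.
move=> zsfree; apply: contra_notN zsfree => /eqP->.
exists 1, 0, 0; rewrite Lset1 oner_neq0 !eqxx !orbT; split => //; ring.
Qed.

Lemma zsfree_red_q x1 x2 x3 : ~ wzs3 A x1 x2 x3 -> v x1 = 0 -> v x2 != 0.
Proof.
move=> zsfree v1; apply/negP => /eqP v2.
have u_nz x : x != 0 -> v x = 0 -> u x != 0.
  by move=> x_nz vx; apply: contra x_nz => /eqP ux; rewrite (red_eq0 ux vx).
have u1 := u_nz _ (zsfree_neq0 zsfree) v1.
have u2 := u_nz _ (zsfree_neq0 (fun h => zsfree (wzs3_swap12 h))) v2.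
apply: zsfree; apply: (@wzs3_of_red _ _ _ (u x2) (- u x1) 0 1 1 0).
- by rewrite /compatible (negbTE u2) oppr_eq0 (negbTE u1) Qset1 !eqxx.
- by rewrite oner_neq0.
- by ring.
by rewrite v1 v2; ring.
Qed.

Lemma zsfree_no_annihilator x1 x2 x3 a1 a2 a3 : ~ wzs3 A x1 x2 x3 ->
  [&& v x1 != 0, v x2 != 0 & v x3 != 0] -> [&& a1 != 0, a2 != 0 & a3 != 0] ->
  a1 * u x1 + a2 * u x2 + a3 * u x3 != 0.
Proof.
rewrite -!(unitZp_prime q_prime) => zsfree /and3P[U1 U2 U3].
move=> /and3P[a1_nz a2_nz a3_nz]; apply/eqP => ua0.
have [s1 [s2 [s3 [Q1 Q2 Q3 vs0]]]] := Qset_zero_sum3 q_prime q_ge7 U1 U2 U3.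
apply: zsfree; apply: (wzs3_of_red _ _ ua0 vs0).
  by rewrite /compatible (negbTE a1_nz) (negbTE a2_nz) (negbTE a3_nz) Q1 Q2 Q3.
by rewrite (Qset_neq0 Q1).
Qed.

Lemma zsfree_red_p x1 x2 x3 : ~ wzs3 A x1 x2 x3 ->
  [&& v x1 != 0, v x2 != 0 & v x3 != 0] ->
  [\/ u x2 = 0 /\ u x3 = 0, u x1 = 0 /\ u x3 = 0 | u x1 = 0 /\ u x2 = 0].
Proof.
move=> zsfree v_nz.
have two_nz : 2%:R != 0 :> 'F_p.
  by rewrite -unitfE unitFpE // prime_coprime // gtnNdvd // (leq_trans _ p_ge7).
have : ~ (1 < (u x1 != 0%R) + (u x2 != 0%R) + (u x3 != 0%R))%N.
  case/(annihilator3 two_nz) => a1 [a2 [a3 [a1_nz a2_nz a3_nz ua0]]].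
  have := @zsfree_no_annihilator _ _ _ a1 a2 a3 zsfree v_nz.
  by rewrite a1_nz a2_nz a3_nz ua0 eqxx => /(_ isT).
have [->|u1] := eqVneq (u x1) 0; have [->|u2] := eqVneq (u x2) 0;
  have [->|u3] := eqVneq (u x3) 0; rewrite ?eqxx //= => _.
all: by [constructor 1 | constructor 2 | constructor 3].
Qed.

(* The weight a1 balances the relation mod p; its companion weight mod q is
   harmless since v x1 = 0 or a1 = 0. *)
Lemma zsfree_pair x1 x2 x3 : ~ wzs3 A x1 x2 x3 -> u x1 != 0 ->
  v x1 = 0 \/ u x2 = 0 /\ u x3 = 0 -> ~ has_wzs (Qset q) [:: v x2; v x3].
Proof.
move=> zsfree u1 v1_or_u23 /has_wzs2[b2 [b3 [b2Q b3Q Qb vb0]]].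
pose a2 : 'F_p := (b2 != 0)%:R; pose a3 : 'F_p := (b3 != 0)%:R.
pose a1 := - (a2 * u x2 + a3 * u x3) / u x1.
apply: zsfree; apply: (@wzs3_of_red _ _ _ a1 a2 a3 (a1 != 0)%:R b2 b3).
- by rewrite compatible_indicator_r !compatible_indicator.
- by case/orP: Qb => /Qset_neq0 ->; rewrite ?orbT.
- by rewrite /a1 divfK // -addrA addNr.
rewrite -addrA vb0 addr0; case: v1_or_u23 => [->|[u2 u3]]; first exact: mulr0.
by rewrite /a1 u2 u3 !mulr0 addr0 oppr0 mul0r.
Qed.

Definition pivot x1 x2 x3 :=
  v x1 = 0 \/ [/\ v x1 != 0, v x2 != 0, v x3 != 0, u x2 = 0 & u x3 = 0].

Definition normal_form (y1 y2 y3 : 'Z_n) :=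
  [/\ (q %| val y1)%N, ~~ (q %| val y2)%N, ~~ (q %| val y3)%N, y1 != 0 &
       extremal (Qset q) [:: (val y2)%:R; (val y3)%:R]]
  \/
  [/\ coprime (val y1) p, ~~ coprime (val y2) p, ~~ coprime (val y3) p &
       extremal (Qset q) [:: (val y2)%:R; (val y3)%:R]].

Lemma zsfree_normal_form x1 x2 x3 : ~ wzs3 A x1 x2 x3 -> pivot x1 x2 x3 ->
  normal_form x1 x2 x3.
Proof.
move=> zsfree piv.
have q_dvdE x : (q %| val x)%N = (v x == 0) by rewrite Zp_red_eq0.
have coprimeE x : coprime (val x) p = (u x != 0).
  by rewrite coprime_sym prime_coprime // -{1}(pdiv_id p_prime) -Zp_red_eq0.
have u1 : u x1 != 0.
  case: piv => [v1|[v1 v2 v3 u2 u3]].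
    by apply: contraNneq (zsfree_neq0 zsfree) => u1; rewrite (red_eq0 u1 v1).
  have := @zsfree_no_annihilator _ _ _ 1 1 1 zsfree.
  by rewrite v1 v2 v3 u2 u3 oner_neq0 !mulr0 !addr0 mul1r => /(_ isT isT).
have extremal23 : v x1 = 0 \/ u x2 = 0 /\ u x3 = 0 ->
    extremal (Qset q) [:: v x2; v x3].
  move=> piv'; exists 3%N; split; first exact: davenport_Qset.
    by [].
  exact: zsfree_pair zsfree u1 piv'.
case: piv => [v1|[_ v2 v3 u2 u3]]; [left | right].
  have v2 := zsfree_red_q zsfree v1.
  have v3 := zsfree_red_q (fun h => zsfree (wzs3_swap23 h)) v1.
  rewrite !q_dvdE v1 eqxx v2 v3 (zsfree_neq0 zsfree).
  by split=> //; apply: extremal23; left.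
by rewrite !coprimeE u1 u2 u3 eqxx; split=> //; apply: extremal23; right.
Qed.

Lemma zsfree_pivot x1 x2 x3 : ~ wzs3 A x1 x2 x3 ->
  [\/ pivot x1 x2 x3, pivot x2 x1 x3 | pivot x3 x2 x1].
Proof.
move=> zsfree; rewrite /pivot.
have [v1|v1] := eqVneq (v x1) 0; first by constructor 1; left.
have [v2|v2] := eqVneq (v x2) 0; first by constructor 2; left.
have [v3|v3] := eqVneq (v x3) 0; first by constructor 3; left.
case: (zsfree_red_p zsfree); rewrite ?v1 ?v2 ?v3 // => -[ua ub].
- by constructor 1; right.
- by constructor 2; right.
by constructor 3; right.
Qed.
End ZeroSumFreeTriples.

Theorem theorem5p5 (p' q : nat) (hp : prime p') (hq : prime q) (hpq : p' != q)
  (hp7 : (7 <= p')%N) (hq7 : (7 <= q)%N) (x1 x2 x3 : 'Z_(p' * q)) :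
  extremal (Lset (p' * q) p') [:: x1; x2; x3] ->
  exists y1 y2 y3 : 'Z_(p' * q),
    equiv_wrt (Lset (p' * q) p') [:: x1; x2; x3] [:: y1; y2; y3] /\
    ( [/\ (q %| val y1)%N, ~~ (q %| val y2)%N, ~~ (q %| val y3)%N, y1 != 0 &
          extremal (Qset q) [:: (val y2)%:R; (val y3)%:R]]
      \/
      [/\ coprime (val y1) p', ~~ coprime (val y2) p', ~~ coprime (val y3) p' &
          extremal (Qset q) [:: (val y2)%:R; (val y3)%:R]] ).
Proof.
case=> _ [_ _ /(contra_not (@has_wzs3 _ _ _ _ _)) zsfree].
have A1 := Lset1 hp hq hpq.
have normal := zsfree_normal_form hp hq hpq hq7.
case: (zsfree_pivot hp hq hpq hp7 hq7 zsfree) => pivot.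
- exists x1, x2, x3; split; first exact: equiv_wrt_refl.
  exact: normal.
- exists x2, x1, x3; split; first exact: equiv_wrt_swap12.
  by apply: normal pivot => /wzs3_swap12.
exists x3, x2, x1; split; first exact: equiv_wrt_swap13.
by apply: normal pivot => /wzs3_swap12/wzs3_swap23/wzs3_swap12.
Qed.
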